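(* The sequence $1\to\mathrm{Iso}(\mathbb U^\prec)\xrightarrow{i^\prec}\mathrm{Aut}(\mathbb U^\prec)\xrightarrow{\pi^\prec}\mathrm{Aut}(\mathbb Q_{\ge0})\to1$ is a short exact sequence of topological groups, where $i^\prec$ is the inclusion and $\pi^\prec(f)=D_f$. Moreover, $\pi^\prec$ admits a continuous homomorphic section and induces an isomorphism of topological groups $\mathrm{Aut}(\mathbb U^\prec)\cong\mathrm{Iso}(\mathbb U^\prec)\rtimes\mathrm{Aut}(\mathbb Q_{\ge0})$.
   Context: A two-sorted ultrametric space is $(X,d,D)$ with $D$ a linear order with least element $0$ and $d$ an ultrametric with values in $D$. A convex order is a linear order of the points in which every ball is convex. $\mathbb U^\prec$ is the Fraïssé limit of the class of finite convexly ordered two-sorted ultrametric spaces with order-preserving dc-embeddings (dc-embedding: injection $f$ with order embedding $D_f$ of distance sets fixing $0$ and $d(f(x),f(x'))=D_f(d(x,x'))$); its distance set is $\mathbb Q_{\ge0}$. $\mathrm{Aut}(\mathbb U^\prec)$ is its group of order-preserving dc-automorphisms with the topology of pointwise convergence on both sorts, $\mathrm{Iso}(\mathbb U^\prec)$ the closed subgroup of those with $D_f=\mathrm{id}$. A short exact sequence of topological groups $1\to G_1\xrightarrow{i}H\xrightarrow{\pi}G_2\to1$ means $i$ is a continuous embedding, $\pi$ a continuous open surjective homomorphism, and $i[G_1]=\ker\pi$. The semidirect product $N\rtimes H$ is $N\times H$ with product topology and multiplication $(n,h)(n',h')=(n\,s(h)n's(h)^{-1},hh')$, the isomorphism being $(n,h)\mapsto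 n\,s(h)$ for the section $s$. *)

From HB Require Import structures.
From mathcomp Require Import all_boot all_order all_algebra.
From Stdlib Require Import ClassicalEpsilon.
From Stdlib Require List.

Set Implicit Arguments. Unset Strict Implicit. Unset Printing Implicit Defensive.
Import Order.TTheory GRing.Theory Num.Theory.
Local Open Scope ring_scope.

Definition qnn : Type := {q : rat | 0 <= q}.
Definition qv (r : qnn) : rat := proj1_sig r.
Definition q0 : qnn := exist (fun q : rat => is_true (0 <= q)) 0 (lexx 0).
Definition qlt (r s : qnn) : Prop := qv r < qv s.
Definition qle (r s : qnn) : Prop := qv r <= qv s.

Definition strict_linear (P : Type) (lt : P -> P -> Prop) : Prop :=
  (forall x, ~ lt x x) /\ (forall x y z, lt x y -> lt y z -> lt x z) /\
  (forall x y, lt x y \/ x = y \/ lt y x).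

Definition ultrametric (P : Type) (d : P -> P -> qnn) : Prop :=
  (forall x y, qv (d x y) = 0 <-> x = y) /\ (forall x y, d x y = d y x) /\
  (forall x y z, qv (d x z) <= Num.max (qv (d x y)) (qv (d y z))).

Definition convex_order (P : Type) (lt : P -> P -> Prop) (d : P -> P -> qnn) : Prop :=
  forall (x : P) (r : qnn) (a b c : P), lt a b -> lt b c ->
    qle (d x a) r -> qle (d x c) r -> qle (d x b) r.

(** The (finite) distance
    sort, a finite linear order with least element 0, is represented (w.l.o.g.) as
    a finite subset [fdist] of Q_{>=0} containing 0. *)
Record fin_space := FinSpace {
  fpt : finType;
  flt : fpt -> fpt -> Prop;
  fd : fpt -> fpt -> qnn;
  fdist : seq qnn }.

Definition is_fin_cous (B : fin_space) : Prop :=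
  strict_linear (@flt B) /\ ultrametric (@fd B) /\ convex_order (@flt B) (@fd B) /\
  List.In q0 (fdist B) /\ (forall x y, List.In (@fd B x y) (fdist B)).

(** Extension property (richness) characterizing the Fraisse limit: every
    order-preserving dc-embedding of a finite substructure (A,E) of the space into
    a finite convexly ordered space B is inverted by an order-preserving
    dc-embedding of B into the space. *)
Definition extension_property (X : Type) (ltX : X -> X -> Prop) (dX : X -> X -> qnn) : Prop :=
  forall (A : seq X) (E : seq qnn),
    List.In q0 E ->
    (forall a a', List.In a A -> List.In a' A -> List.In (dX a a') E) ->
  forall (B : fin_space), is_fin_cous B ->
  forall (eP : X -> fpt B) (eD : qnn -> qnn),
    (forall a a', List.In a A -> List.In a' A -> eP a = eP a' -> a = a') ->
    (forall a a', List.In a A -> List.In a' A -> ltX a a' -> @flt B (eP a) (eP a')) ->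
    (forall r s, List.In r E -> List.In s E -> qlt r s -> qlt (eD r) (eD s)) ->
    eD q0 = q0 ->
    (forall r, List.In r E -> List.In (eD r) (fdist B)) ->
    (forall a a', List.In a A -> List.In a' A -> @fd B (eP a) (eP a') = eD (dX a a')) ->
  exists (gP : fpt B -> X) (gD : qnn -> qnn),
    injective gP /\ (forall b b', @flt B b b' -> ltX (gP b) (gP b')) /\
    (forall r s, List.In r (fdist B) -> List.In s (fdist B) -> qlt r s -> qlt (gD r) (gD s)) /\
    gD q0 = q0 /\
    (forall b b', dX (gP b) (gP b') = gD (@fd B b b')) /\
    (forall a, List.In a A -> gP (eP a) = a) /\
    (forall r, List.In r E -> gD (eD r) = r).

Definition is_U_prec (X : Type) (ltX : X -> X -> Prop) (dX : X -> X -> qnn) : Prop :=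
  (exists c : X -> nat, injective c) /\
  strict_linear ltX /\ ultrametric dX /\ convex_order ltX dX /\
  extension_property ltX dX.

(** Groups.  An element of Aut is a pair (f, D_f). *)
Definition aut_pair (X : Type) : Type := ((X -> X) * (qnn -> qnn))%type.

Definition is_autQ (phi : qnn -> qnn) : Prop :=
  bijective phi /\ (forall r s, qlt (phi r) (phi s) <-> qlt r s).

Definition is_aut (X : Type) (ltX : X -> X -> Prop) (dX : X -> X -> qnn)
    (g : aut_pair X) : Prop :=
  bijective g.1 /\ (forall x y, ltX (g.1 x) (g.1 y) <-> ltX x y) /\
  is_autQ g.2 /\ g.2 q0 = q0 /\
  (forall x y, dX (g.1 x) (g.1 y) = g.2 (dX x y)).

Definition is_iso (X : Type) (ltX : X -> X -> Prop) (dX : X -> X -> qnn)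
    (g : aut_pair X) : Prop :=
  is_aut ltX dX g /\ g.2 = id.

Definition aut_mul (X : Type) (g h : aut_pair X) : aut_pair X := (g.1 \o h.1, g.2 \o h.2).
Definition finv (A : Type) (f : A -> A) : A -> A :=
  fun y => epsilon (inhabits y) (fun x => f x = y).
Definition aut_inv (X : Type) (g : aut_pair X) : aut_pair X := (finv g.1, finv g.2).
Definition autQ_mul (phi psi : qnn -> qnn) : qnn -> qnn := phi \o psi.

(** Topology of pointwise convergence (sorts discrete) on a subset S of T,
    given evaluation maps ev : T -> I -> V. *)
Definition pw_open (T I V : Type) (S : T -> Prop) (ev : T -> I -> V) (U : T -> Prop) : Prop :=
  (forall g, U g -> S g) /\
  (forall g, U g -> exists s : seq I,
      forall h, S h -> (forall i, List.In i s -> ev h i = ev g i) -> U h).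

Definition ev_aut (X : Type) (g : aut_pair X) (i : X + qnn) : X + qnn :=
  match i with inl x => inl (g.1 x) | inr r => inr (g.2 r) end.
Definition ev_autQ (phi : qnn -> qnn) (r : qnn) : qnn := phi r.
Definition ev_prod (T1 I1 V1 T2 I2 V2 : Type) (ev1 : T1 -> I1 -> V1) (ev2 : T2 -> I2 -> V2)
    (p : T1 * T2) (i : I1 + I2) : V1 + V2 :=
  match i with inl j => inl (ev1 p.1 j) | inr j => inr (ev2 p.2 j) end.
Definition prod_set (T1 T2 : Type) (S1 : T1 -> Prop) (S2 : T2 -> Prop) (p : T1 * T2) : Prop :=
  S1 p.1 /\ S2 p.2.

Section Maps.
Context (T1 I1 V1 T2 I2 V2 : Type) (S1 : T1 -> Prop) (ev1 : T1 -> I1 -> V1)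
        (S2 : T2 -> Prop) (ev2 : T2 -> I2 -> V2).

Definition pw_continuous (f : T1 -> T2) : Prop :=
  (forall g, S1 g -> S2 (f g)) /\
  (forall U, pw_open S2 ev2 U -> pw_open S1 ev1 (fun g => S1 g /\ U (f g))).

Definition pw_openmap (f : T1 -> T2) : Prop :=
  forall U, pw_open S1 ev1 U -> pw_open S2 ev2 (fun y => exists g, U g /\ f g = y).

Definition inj_on (f : T1 -> T2) : Prop :=
  forall g g', S1 g -> S1 g' -> f g = f g' -> g = g'.

Definition pw_embedding (f : T1 -> T2) : Prop :=
  pw_continuous f /\ inj_on f /\
  (forall U, pw_open S1 ev1 U -> exists V, pw_open S2 ev2 V /\
     forall y, (exists g, U g /\ f g = y) <-> (V y /\ exists g, S1 g /\ f g = y)).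

Definition pw_homeo (f : T1 -> T2) : Prop :=
  pw_continuous f /\ pw_openmap f /\ inj_on f /\
  (forall y, S2 y -> exists g, S1 g /\ f g = y).

Definition hom_on (m1 : T1 -> T1 -> T1) (m2 : T2 -> T2 -> T2) (f : T1 -> T2) : Prop :=
  forall g h, S1 g -> S1 h -> f (m1 g h) = m2 (f g) (f h).
End Maps.

Definition i_prec (X : Type) (g : aut_pair X) : aut_pair X := g.
Definition pi_prec (X : Type) (g : aut_pair X) : qnn -> qnn := g.2.

Definition sd_mul (X : Type) (s : (qnn -> qnn) -> aut_pair X)
    (p q : aut_pair X * (qnn -> qnn)) : aut_pair X * (qnn -> qnn) :=
  (aut_mul p.1 (aut_mul (s p.2) (aut_mul q.1 (aut_inv (s p.2)))), autQ_mul p.2 q.2).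
Definition sd_map (X : Type) (s : (qnn -> qnn) -> aut_pair X)
    (p : aut_pair X * (qnn -> qnn)) : aut_pair X := aut_mul p.1 (s p.2).

(* Every copy of U^≺ is isomorphic, by a back-and-forth argument, to a concrete
   model: the finitely supported functions f : Q≥0 → Q with f 0 = 0, where d(f, g)
   is the largest point at which f and g differ and f ≺ g iff f < g at that point.
   The forth step uses the convexity of balls, the back step the extension
   property applied to a finite subspace of the model.  Aut(Q≥0) acts on the
   model by f ↦ f ∘ φ⁻¹, which transforms distances by φ and preserves the order;
   transported to X this is a homomorphic section s of π.  Every g ∈ Aut factors
   uniquely as (g s(D_g)⁻¹) s(D_g), and s(φ) moves a point x according to φ on
   the finite support of its image in the model, so finitely many values of φ
   control finitely many values of s(φ): this gives continuity and openness. *)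

From Pilot Require Import Defs.
From mathcomp Require Import all_boot all_order all_algebra.
From mathcomp Require Import lra.
From Stdlib Require Import ClassicalEpsilon Classical FunctionalExtensionality ProofIrrelevance.
From Stdlib Require List.
Set Implicit Arguments. Unset Strict Implicit. Unset Printing Implicit Defensive.
Import Order.TTheory GRing.Theory Num.Theory.
Local Open Scope ring_scope.

Lemma qv_inj : injective qv.
Proof. exact: val_inj. Qed.

Lemma qv_ge0 (a : qnn) : 0 <= qv a.
Proof. exact: (proj2_sig a). Qed.

Lemma qlt_irr a : ~ qlt a a.
Proof. by rewrite /qlt ltxx. Qed.

Lemma qlt_trans a b c : qlt a b -> qlt b c -> qlt a c.
Proof. rewrite /qlt; lra. Qed.

Lemma qlt_total a b : qlt a b \/ a = b \/ qlt b a.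
Proof.
rewrite /qlt; case: (ltgtP (qv a) (qv b)) => h; auto.
by right; left; apply: qv_inj.
Qed.

Lemma qle_eqVlt a b : qle a b <-> qlt a b \/ a = b.
Proof.
rewrite /qle /qlt le_eqVlt; split; last by case=> [->|->]; rewrite ?orbT ?eqxx.
by case/orP=> [/eqP/qv_inj|]; auto.
Qed.

Lemma qleNgt a b : qle a b <-> ~ qlt b a.
Proof. by rewrite /qle /qlt leNgt; split=> [/negP|/negP]. Qed.

Lemma qle_anti a b : qle a b -> qle b a -> a = b.
Proof. by rewrite /qle => h1 h2; apply: qv_inj; lra. Qed.

Lemma qle_trans a b c : qle a b -> qle b c -> qle a c.
Proof. rewrite /qle; lra. Qed.

Lemma qle_refl a : qle a a.
Proof. by rewrite /qle. Qed.

Lemma qge0 a : qle q0 a.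
Proof. exact: qv_ge0. Qed.

Lemma qltW a b : qlt a b -> qle a b.
Proof. rewrite /qlt /qle; lra. Qed.

Lemma qlt_le_trans a b c : qlt a b -> qle b c -> qlt a c.
Proof. rewrite /qle /qlt; lra. Qed.

Lemma qle_lt_trans a b c : qle a b -> qlt b c -> qlt a c.
Proof. rewrite /qle /qlt; lra. Qed.

Lemma qltn0 a : ~ qlt a q0.
Proof. by rewrite /qlt /= ltNge qv_ge0. Qed.

Lemma qlt0 a : a <> q0 -> qlt q0 a.
Proof.
move=> a0; have [//|[e|/qltn0 //]] := qlt_total q0 a.
by case: a0.
Qed.

Definition toq (q : rat) : qnn := insubd q0 q.

Lemma toqK a : toq (qv a) = a.
Proof. by rewrite /toq /qv valKd. Qed.

Lemma rat_max_finite (l : seq rat) (A : rat -> Prop) :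
  (forall p, A p -> List.In p l) -> (exists p, A p) ->
  exists2 a, A a & forall p, A p -> p <= a.
Proof.
elim: l A => [|c l IH] A Al [p0 Ap0]; first by case: (Al _ Ap0).
have [[q [Aq qc]]|] := classic (exists q, A q /\ q <> c); last first.
  move=> onlyc; have Ac_eq q : A q -> q = c.
    by move=> Aq; apply: NNPP => qc; apply: onlyc; exists q.
  by exists c; [rewrite -(Ac_eq _ Ap0)|move=> q /Ac_eq ->].
have Al' r : A r /\ r <> c -> List.In r l.
  by case=> /Al [->|//] /(_ erefl).
have [a [Aa _] amax] := IH _ Al' (ex_intro _ q (conj Aq qc)).
have [Ac|nAc] := classic (A c); last first.
  by exists a => // r Ar; apply: amax; split=> // rc; apply: nAc; rewrite -rc.
have [ac|ca] := lerP a c.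
  exists c => // r Ar; have [->//|rc] := eqVneq r c.
  exact: le_trans (amax _ (conj Ar (elimN eqP rc))) ac.
exists a => // r Ar; have [->|rc] := eqVneq r c; first exact: ltW.
exact: amax (conj Ar (elimN eqP rc)).
Qed.

Lemma rat_min_finite (l : seq rat) (A : rat -> Prop) :
  (forall p, A p -> List.In p l) -> (exists p, A p) ->
  exists2 a, A a & forall p, A p -> a <= p.
Proof.
move=> Al [p Ap].
have Al' q : A (- q) -> List.In q (map -%R l).
  by move=> /Al /(List.in_map -%R); rewrite opprK.
have Ap' : A (- - p) by rewrite opprK.
have [a Aa amax] := rat_max_finite Al' (ex_intro _ (- p) Ap').
by exists (- a) => // q Aq; rewrite lerNl amax ?opprK.
Qed.

Lemma rat_gap (l : seq rat) (A B : rat -> Prop) :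
  (forall p, A p -> List.In p l) -> (forall p, B p -> List.In p l) ->
  (forall p q, A p -> B q -> p < q) ->
  exists v, (forall p, A p -> p < v) /\ (forall q, B q -> v < q).
Proof.
move=> Al Bl AB.
have [EA|nA] := classic (exists p, A p); have [EB|nB] := classic (exists q, B q).
- have [a Aa amax] := rat_max_finite Al EA; have [b Bb bmin] := rat_min_finite Bl EB.
  have ab := AB _ _ Aa Bb.
  by exists ((a + b) / 2); split=> p Hp; [have := amax _ Hp|have := bmin _ Hp]; lra.
- have [a Aa amax] := rat_max_finite Al EA.
  by exists (a + 1); split=> p Hp; [have := amax _ Hp; lra|case: nB; exists p].
- have [b Bb bmin] := rat_min_finite Bl EB.
  by exists (b - 1); split=> p Hp; [case: nA; exists p|have := bmin _ Hp; lra].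
- by exists 0; split=> p Hp; [case: nA|case: nB]; exists p.
Qed.

Lemma qnn_max_finite (l : seq rat) (P : qnn -> Prop) :
  (forall t, P t -> List.In (qv t) l) -> (exists t, P t) ->
  exists2 r, P r & forall t, P t -> qle t r.
Proof.
move=> Pl [t Pt].
pose A p := exists2 r, P r & qv r = p.
have Al p : A p -> List.In p l by case=> r /Pl + <-.
have [_ [r Pr <-] rmax] := rat_max_finite Al (ex_intro _ _ (ex_intro2 _ _ t Pt erefl)).
by exists r => // u Pu; apply: rmax; exists u.
Qed.

Lemma list_argmin (T : Type) (h : T -> qnn) (l : seq T) : l <> [::] ->
  exists2 a, List.In a l & forall b, List.In b l -> qle (h a) (h b).
Proof.
case: l => [//|c l] _.
pose A p := exists2 a, List.In a (c :: l) & qv (h a) = p.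
have Al p : A p -> List.In p (map (qv \o h) (c :: l)).
  by case=> a al <-; exact: (List.in_map (qv \o h) _ _ al).
have [_ [a al <-] amin] :=
  rat_min_finite Al (ex_intro _ _ (ex_intro2 _ _ c (or_introl erefl) erefl)).
by exists a => // b bl; apply: amin; exists b.
Qed.

Section Ultrametric.
Variables (P : Type) (d : P -> P -> qnn).
Hypothesis d_um : ultrametric d.

Lemma um_self x : d x x = q0.
Proof. by apply: qv_inj; apply d_um. Qed.

Lemma um_eq0 x y : d x y = q0 -> x = y.
Proof. by move=> e; apply d_um; rewrite e. Qed.

Lemma um_sym x y : d x y = d y x.
Proof. by case: d_um => _ []. Qed.

Lemma um_le x y z r : qle (d x y) r -> qle (d y z) r -> qle (d x z) r.
Proof.
case: d_um => _ [_ um] h1 h2.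
by apply: le_trans (um x y z) _; rewrite ge_max h1 h2.
Qed.

Lemma um_isosceles a b c : qlt (d a b) (d b c) -> d a c = d b c.
Proof.
case: d_um => _ [_ um] lt; apply: qv_inj; move: lt (um a b c) (um b a c).
by rewrite /qlt (um_sym b a) !le_max => ? /orP[] ? /orP[] ?; lra.
Qed.
End Ultrametric.

Record fsq := FSq {
  fsq_fun :> qnn -> rat;
  fsq_fun0 : fsq_fun q0 = 0;
  fsq_finite : exists s : seq rat, forall t, fsq_fun t <> 0 -> List.In (qv t) s }.

Section FsqModel.
Implicit Types (f g h : fsq) (r t : qnn).

Lemma fsq_ext f g : f =1 g -> f = g.
Proof.
case: f g => f f0 ffin [g g0 gfin] /= /functional_extensionality fg.
by subst g; congr FSq; apply: proof_irrelevance.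
Qed.

Definition is_fs_dist (f g : fsq) (r : qnn) : Prop :=
  (f r <> g r /\ forall t, f t <> g t -> qle t r) \/ (f =1 g /\ r = q0).

Definition fs_dist (f g : fsq) : qnn := epsilon (inhabits q0) (is_fs_dist f g).

Lemma fs_dist_spec f g : is_fs_dist f g (fs_dist f g).
Proof.
apply: epsilon_spec.
have [[t ft]|same] := classic (exists t, f t <> g t); last first.
  by exists q0; right; split=> // t; apply: NNPP => ne; apply: same; exists t.
have [sf Hf] := fsq_finite f; have [sg Hg] := fsq_finite g.
have diff_in u : f u <> g u -> List.In (qv u) (sf ++ sg).
  move=> ne; apply: List.in_or_app.
  have [f0|/Hf] := classic (f u = 0); last by left.
  by right; apply: Hg; rewrite -f0 => /esym.
have [r ne rmax] := qnn_max_finite diff_in (ex_intro _ t ft).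
by exists r; left.
Qed.

Lemma fs_dist_above f g t : qlt (fs_dist f g) t -> f t = g t.
Proof.
case: (fs_dist_spec f g) => [[_ dmax]|[fg _]] lt //.
by apply: NNPP => /dmax; rewrite qleNgt.
Qed.

Lemma fs_dist_neq f g : f <> g -> f (fs_dist f g) <> g (fs_dist f g).
Proof.
by case: (fs_dist_spec f g) => [[//]|[fg _] fNg]; case: fNg; apply: fsq_ext.
Qed.

Lemma fs_distE f g r : f r <> g r -> (forall t, qlt r t -> f t = g t) -> fs_dist f g = r.
Proof.
move=> ne above; case: (fs_dist_spec f g) => [[dne dmax]|[fg _]]; last by case: ne.
apply: qle_anti; last exact: dmax.
by rewrite qleNgt => /above.
Qed.

Lemma fs_dist_self f : fs_dist f f = q0.
Proof. by case: (fs_dist_spec f f) => [[]|[]]. Qed.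

Lemma fs_dist_le f g r : qle (fs_dist f g) r <-> forall t, qlt r t -> f t = g t.
Proof.
split=> [le t lt|above]; first by apply: fs_dist_above; apply: qle_lt_trans lt.
have [->|fg] := classic (f = g); first by rewrite fs_dist_self; apply: qge0.
by rewrite qleNgt => /above; apply: fs_dist_neq.
Qed.

Lemma fs_dist_sym f g : fs_dist f g = fs_dist g f.
Proof.
have [->//|fg] := classic (f = g).
apply: fs_distE => [e|t lt]; first by apply: (fs_dist_neq (not_eq_sym fg)); rewrite e.
by apply/esym; apply: fs_dist_above.
Qed.

Lemma fs_dist_ultrametric : ultrametric fs_dist.
Proof.
split=> [f g|]; last split=> [|f g h].
- split=> [d0|->]; last by rewrite fs_dist_self.
  apply: NNPP => /fs_dist_neq; have -> : fs_dist f g = q0 by apply: qv_inj.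
  by rewrite !fsq_fun0.
- exact: fs_dist_sym.
- have le_both r : qle (fs_dist f g) r -> qle (fs_dist g h) r -> qle (fs_dist f h) r.
    by rewrite !fs_dist_le => fg gh t lt; rewrite fg ?gh.
  rewrite le_max; apply/orP.
  have [le|le] := orP (le_total (qv (fs_dist f g)) (qv (fs_dist g h))).
    by right; apply: le_both (qle_refl _).
  by left; apply: le_both (qle_refl _) _.
Qed.

Definition fs_lt (f g : fsq) : Prop := f <> g /\ f (fs_dist f g) < g (fs_dist f g).

Lemma fs_lt_at f g (s : qnn) : fs_dist f g = s -> f <> g -> fs_lt f g <-> f s < g s.
Proof. by move=> <- fg; split=> [[]|]. Qed.

Lemma fs_lt_irr f : ~ fs_lt f f.
Proof. by case. Qed.

Lemma fs_lt_trans f g h : fs_lt f g -> fs_lt g h -> fs_lt f h.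
Proof.
move=> [fg fg_lt] [gh gh_lt].
set a := fs_dist f g in fg_lt; set b := fs_dist g h in gh_lt.
have fg_above := @fs_dist_above f g; have gh_above := @fs_dist_above g h.
have [ab|[ab|ba]] := qlt_total a b.
- have fgb : f b = g b by apply: fg_above.
  have fh : fs_dist f h = b.
    apply: fs_distE => [|t bt]; first by rewrite fgb => e; move: gh_lt; rewrite e ltxx.
    by rewrite fg_above ?gh_above //; apply: qlt_trans bt.
  have fNh : f <> h by move=> e; move: gh_lt; rewrite -fgb e ltxx.
  by rewrite (fs_lt_at fh fNh) fgb.
- rewrite -ab in gh_lt; have fh_lt := lt_trans fg_lt gh_lt.
  have fNh : f <> h by move=> e; move: fh_lt; rewrite e ltxx.
  have fh : fs_dist f h = a.
    apply: fs_distE => [e|t at_]; first by move: fh_lt; rewrite e ltxx.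
    by rewrite fg_above // gh_above // -/b -ab.
  by rewrite (fs_lt_at fh fNh).
- have gha : g a = h a by apply: gh_above.
  have fh : fs_dist f h = a.
    apply: fs_distE => [|t at_]; first by rewrite -gha => e; move: fg_lt; rewrite e ltxx.
    by rewrite fg_above ?gh_above //; apply: qlt_trans at_.
  have fNh : f <> h by move=> e; move: fg_lt; rewrite gha e ltxx.
  by rewrite (fs_lt_at fh fNh) -gha.
Qed.

Lemma fs_lt_total f g : fs_lt f g \/ f = g \/ fs_lt g f.
Proof.
have [->|fg] := classic (f = g); first by right; left.
have := fs_dist_neq fg; case: (ltgtP (f (fs_dist f g)) (g (fs_dist f g))) => // lt _.
  by left.
by right; right; split; [move=> e; apply: fg|rewrite fs_dist_sym].
Qed.

Lemma fs_lt_strict_linear : strict_linear fs_lt.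
Proof. by split; [exact: fs_lt_irr|split; [exact: fs_lt_trans|exact: fs_lt_total]]. Qed.

Lemma fs_lt_convex : convex_order fs_lt fs_dist.
Proof.
move=> x r a b c [aNb ab] [bNc bc] xa xc; apply: NNPP; rewrite qleNgt => /NNPP lt.
set s := fs_dist x b in lt.
have xNb : x <> b by move=> e; move: lt; rewrite /s e fs_dist_self => /qltn0.
have xb := fs_dist_neq xNb; fold s in xb.
have near_x y : qle (fs_dist x y) r -> forall t, qle s t -> y t = x t.
  by rewrite fs_dist_sym fs_dist_le => yx t st; apply: yx; apply: qlt_le_trans st.
have dab : fs_dist a b = s.
  apply: fs_distE => [|t st]; first by rewrite (near_x a xa s (qle_refl s)).
  by rewrite (near_x a xa t (qltW st)) (fs_dist_above st).
have dbc : fs_dist b c = s.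
  apply: fs_distE => [|t st]; first by rewrite (near_x c xc s (qle_refl s)) => e; apply: xb.
  by rewrite (near_x c xc t (qltW st)) (fs_dist_above st).
move: ab bc; rewrite dab dbc (near_x a xa s (qle_refl s)) (near_x c xc s (qle_refl s)).
by move=> ab /(lt_trans ab); rewrite ltxx.
Qed.

Lemma fs0_finite : exists s : seq rat, forall t, (0 : rat) <> 0 -> List.In (qv t) s.
Proof. by exists [::]. Qed.

Definition fs0 : fsq := FSq erefl fs0_finite.

Section OnePointChange.
Variables (f : fsq) (r : qnn) (v : rat).

Definition fs_set_fun t : rat :=
  if qv r < qv t then f t else if (qv t == qv r) && (0 < qv t) then v else 0.

Lemma fs_set_fun0 : fs_set_fun q0 = 0.
Proof. by rewrite /fs_set_fun /= ltNge qv_ge0 /= ltxx andbF. Qed.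

Lemma fs_set_finite : exists s : seq rat, forall t, fs_set_fun t <> 0 -> List.In (qv t) s.
Proof.
have [s fs] := fsq_finite f; exists (qv r :: s) => t; rewrite /fs_set_fun.
case: ifP => _; first by move/fs; right.
by case: ifP => [/andP [/eqP -> _] _|_ //]; left.
Qed.

Definition fs_set : fsq := FSq fs_set_fun0 fs_set_finite.

Lemma fs_set_above t : qlt r t -> fs_set t = f t.
Proof. by rewrite /= /fs_set_fun /qlt => ->. Qed.

Lemma fs_set_at : qlt q0 r -> fs_set r = v.
Proof. by rewrite /= /fs_set_fun /qlt ltxx eqxx => ->. Qed.
End OnePointChange.

Definition assoc (l : seq (rat * rat)) (q : rat) : rat :=
  foldr (fun p acc => if p.1 == q then p.2 else acc) 0 l.

Lemma assoc_finite l q : assoc l q <> 0 -> List.In q (map fst l).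
Proof.
elim: l => [//|[a b] l IH] /=; case: eqP => [->|_]; first by left.
by move/IH; right.
Qed.

Lemma assoc_graph_in (h : rat -> rat) s q :
  List.In q s -> assoc [seq (u, h u) | u <- s] q = h q.
Proof.
elim: s => [//|c s IH] /= qs; case: eqP => [->//|qc].
by apply: IH; case: qs => // e; case: qc.
Qed.

Lemma assoc_graph_notin (h : rat -> rat) s q :
  ~ List.In q s -> assoc [seq (u, h u) | u <- s] q = 0.
Proof.
elim: s => [//|c s IH] /= qs; case: eqP => [e|_]; first by case: qs; left.
by apply: IH => ?; apply: qs; right.
Qed.

Definition fs_of_assoc_fun (l : seq (rat * rat)) t : rat :=
  if qv t == 0 then 0 else assoc l (qv t).

Lemma fs_of_assoc_fun0 l : fs_of_assoc_fun l q0 = 0.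
Proof. by rewrite /fs_of_assoc_fun eqxx. Qed.

Lemma fs_of_assoc_finite l :
  exists s : seq rat, forall t, fs_of_assoc_fun l t <> 0 -> List.In (qv t) s.
Proof.
by exists (map fst l) => t; rewrite /fs_of_assoc_fun; case: ifP => // _ /assoc_finite.
Qed.

Definition fs_of_assoc l : fsq := FSq (fs_of_assoc_fun0 l) (fs_of_assoc_finite l).

Definition fs_enum (n : nat) : fsq :=
  if unpickle n is Some l then fs_of_assoc l else fs0.

Lemma fs_enum_surj f : exists n, fs_enum n = f.
Proof.
have [s fs] := fsq_finite f.
exists (pickle [seq (u, f (toq u)) | u <- s]); rewrite /fs_enum pickleK.
apply: fsq_ext => t /=; rewrite /fs_of_assoc_fun; case: eqP => [t0|t0].
  by rewrite (qv_inj (t0 : qv t = qv q0)) fsq_fun0.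
have [ts|tNs] := classic (List.In (qv t) s); first by rewrite assoc_graph_in // toqK.
by rewrite assoc_graph_notin //; apply: esym; apply: NNPP => /fs.
Qed.
End FsqModel.

Section BackAndForth.
Variables (X : Type) (ltX : X -> X -> Prop) (dX : X -> X -> qnn).
Hypotheses (ltX_lin : strict_linear ltX) (dX_um : ultrametric dX).
Hypotheses (X_convex : convex_order ltX dX) (X_ext : extension_property ltX dX).

Lemma ltX_irr x : ~ ltX x x.
Proof. by case: ltX_lin. Qed.

Lemma ltX_trans x y z : ltX x y -> ltX y z -> ltX x z.
Proof. by case: ltX_lin => _ [+ _]; apply. Qed.

Lemma ltX_total x y : ltX x y \/ x = y \/ ltX y x.
Proof. by case: ltX_lin => _ []. Qed.

Definition matched (p q : X * fsq) : Prop :=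
  [/\ p.1 = q.1 <-> p.2 = q.2, dX p.1 q.1 = fs_dist p.2 q.2 & ltX p.1 q.1 <-> fs_lt p.2 q.2].

Definition partial_iso (L : seq (X * fsq)) : Prop :=
  forall p q, List.In p L -> List.In q L -> matched p q.

Lemma matched_refl p : matched p p.
Proof.
split=> //; first by rewrite (um_self dX_um) fs_dist_self.
by split=> [/ltX_irr|/fs_lt_irr].
Qed.

Lemma matched_sym p q : matched p q -> matched q p.
Proof.
case: p q => [x f] [y g] [/= E D O]; split=> /=.
- by split=> e; apply/esym/E.
- by rewrite (um_sym dX_um) fs_dist_sym.
split=> lt.
  have [//|[gf|/O xy]] := fs_lt_total g f.
    by move: lt; rewrite (proj2 E (esym gf)) => /ltX_irr.
  by case: (ltX_irr (ltX_trans lt xy)).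
have [//|[yx|/O fg]] := ltX_total y x.
  by move: lt; rewrite (proj1 E (esym yx)) => /fs_lt_irr.
by case: (fs_lt_irr (fs_lt_trans lt fg)).
Qed.

Lemma partial_iso_nil : partial_iso [::].
Proof. by []. Qed.

Lemma partial_iso_cons p L :
  partial_iso L -> (forall q, List.In q L -> matched p q) -> partial_iso (p :: L).
Proof.
move=> L_iso pL a b [<-|aL] [<-|bL]; first exact: matched_refl.
- exact: pL.
- exact/matched_sym/pL.
- exact: L_iso.
Qed.

Section Forth.
Variables (L : seq (X * fsq)) (x x0 : X) (f0 : fsq).
Hypotheses (L_iso : partial_iso L) (x_new : forall f, ~ List.In (x, f) L).
Hypotheses (x0f0_L : List.In (x0, f0) L)
  (x0_nearest : forall q, List.In q L -> qle (dX x x0) (dX x q.1)).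

Let r := dX x x0.

(* The partner of [x] must take at [r] a value between those of the partners
   of the points of B(x0, r) below and above [x]. *)
Definition ball_side (side : X -> Prop) (v : rat) : Prop :=
  exists2 p, List.In p L & [/\ qle (dX x0 p.1) r, side p.1 & v = p.2 r].

Lemma x_neq_L y : List.In y (map fst L) -> x <> y.
Proof. by move=> /List.in_map_iff [[y' g] [/= <- yg]] xy; move: yg; rewrite -xy; apply: x_new. Qed.

Lemma r_gt0 : qlt q0 r.
Proof.
apply: qlt0 => /(um_eq0 dX_um); apply: x_neq_L.
exact: (List.in_map fst _ _ x0f0_L).
Qed.

Lemma ball_side_finite side v : ball_side side v -> List.In v (map (fun p : X * fsq => p.2 r) L).
Proof. by case=> p pL [_ _ ->]; apply: (List.in_map (fun p : X * fsq => p.2 r)). Qed.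

Lemma ball_side_sep p q : ball_side (ltX^~ x) p -> ball_side (ltX x) q -> p < q.
Proof.
move=> [[x1 f1] /= x1L [B1 x1x ->]] [[x2 f2] /= x2L [B2 xx2 ->]].
have [E12 d12 o12] := L_iso x1L x2L; rewrite /= in E12 d12 o12.
have le12 : qle (dX x1 x2) r by apply: (um_le dX_um (y := x0)); rewrite // (um_sym dX_um).
have [lt|eq] := proj1 (qle_eqVlt _ _) le12.
  have x_near_x1 : qle (dX x1 x) (dX x1 x2).
    by apply: X_convex x1x xx2 _ (qle_refl _); rewrite (um_self dX_um); apply: qge0.
  have := qle_lt_trans (qle_trans (x0_nearest x1L) _) lt.
  by rewrite (um_sym dX_um x) => /(_ x_near_x1) /qlt_irr.
have f12 : f1 <> f2 by move/E12 => e; move: x1x; rewrite e => /(ltX_trans xx2) /ltX_irr.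
by rewrite d12 in eq; rewrite -(fs_lt_at eq f12); apply/o12/(ltX_trans x1x).
Qed.

Section Partner.
Variable v : rat.
Hypotheses (v_lower : forall p, ball_side (ltX^~ x) p -> p < v)
  (v_upper : forall q, ball_side (ltX x) q -> v < q).

Let f := fs_set f0 r v.

Lemma forth_in_ball y g : List.In (y, g) L -> qle (dX x0 y) r ->
  dX x y = fs_dist f g /\ (ltX x y <-> fs_lt f g).
Proof.
move=> yL B; have [_ d0 _] := L_iso x0f0_L yL; rewrite /= in d0.
have dxy : dX x y = r.
  by apply: qle_anti (x0_nearest yL); apply: (um_le dX_um (y := x0)) => //; apply: qle_refl.
have xy : x <> y by apply: x_neq_L; apply: (List.in_map fst _ _ yL).
have side : ltX y x \/ ltX x y by case: (ltX_total y x) => [|[e|]]; auto; case: xy.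
have v_neq : v <> g r.
  move=> e; case: side => s.
    by have := v_lower (ex_intro2 _ _ (y, g) yL (And3 B s erefl)); rewrite e ltxx.
  by have := v_upper (ex_intro2 _ _ (y, g) yL (And3 B s erefl)); rewrite e ltxx.
have dfg : fs_dist f g = r.
  apply: fs_distE => [|t rt]; first by rewrite fs_set_at //; apply: r_gt0.
  by rewrite fs_set_above //; move: B t rt; rewrite d0 => /fs_dist_le.
have fg : f <> g by move=> e; move: r_gt0; rewrite -dfg e fs_dist_self => /qlt_irr.
split; first by rewrite dxy dfg.
rewrite (fs_lt_at dfg fg) fs_set_at; last exact: r_gt0.
split=> [s|vg]; first exact: (v_upper (ex_intro2 _ _ (y, g) yL (And3 B s erefl))).
case: side => // s.
by have := v_lower (ex_intro2 _ _ (y, g) yL (And3 B s erefl)); rewrite ltNge (ltW vg).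
Qed.

Lemma forth_out_ball y g : List.In (y, g) L -> ~ qle (dX x0 y) r ->
  dX x y = fs_dist f g /\ (ltX x y <-> fs_lt f g).
Proof.
move=> yL /qleNgt/NNPP rs; have [E0 d0 o0] := L_iso x0f0_L yL; rewrite /= in E0 d0 o0.
set s := dX x0 y in rs.
have dxy : dX x y = s by apply: (um_isosceles dX_um).
have x0y : x0 <> y by move=> e; move: rs; rewrite /s e (um_self dX_um) => /qltn0.
have f0g : f0 <> g by move/E0.
have dfg : fs_dist f g = s.
  apply: fs_distE => [|t st]; first by rewrite fs_set_above // /s d0; apply: fs_dist_neq.
  rewrite fs_set_above; last exact: qlt_trans rs st.
  by apply: fs_dist_above; rewrite -d0.
have fg : f <> g.
  by move=> e; move: (qlt_trans r_gt0 rs); rewrite -dfg e fs_dist_self => /qlt_irr.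
split; first by rewrite dxy dfg.
rewrite (fs_lt_at dfg fg) fs_set_above // -(fs_lt_at (esym d0) f0g) -o0.
have x_in : qle (dX x0 x) r by rewrite (um_sym dX_um); apply: qle_refl.
have x0_in : qle (dX x0 x0) r by rewrite (um_self dX_um); apply: qge0.
have y_out : ~ qle (dX x0 y) r by rewrite qleNgt => /(_ rs).
split=> lt.
  have [//|[e|yx0]] := ltX_total x0 y; first by case: x0y.
  by case: y_out; apply: X_convex lt yx0 x_in x0_in.
have [//|[e|yx]] := ltX_total x y; first by move: rs; rewrite /s -e (um_sym dX_um) => /qlt_irr.
by case: y_out; apply: X_convex lt yx x0_in x_in.
Qed.
End Partner.
End Forth.

Lemma partial_iso_forth L x : partial_iso L -> exists f, partial_iso ((x, f) :: L).
Proof.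
move=> L_iso.
have [[f xfL]|x_new] := classic (exists f, List.In (x, f) L).
  by exists f; apply: partial_iso_cons => // q; apply: L_iso.
have {}x_new f : ~ List.In (x, f) L by move=> xf; apply: x_new; exists f.
have [->|L_nil] := classic (L = [::]); first by exists fs0; apply: partial_iso_cons.
have [[x0 f0] x0f0_L x0_nearest] := list_argmin (fun p => dX x p.1) L_nil.
have [v [v_lower v_upper]] := rat_gap (@ball_side_finite L x x0 _)
  (@ball_side_finite L x x0 _) (ball_side_sep L_iso x0_nearest).
exists (fs_set f0 (dX x x0) v); apply: partial_iso_cons => // [[y g]] yL.
have [dxy ord] : dX x y = fs_dist (fs_set f0 (dX x x0) v) g /\
    (ltX x y <-> fs_lt (fs_set f0 (dX x x0) v) g).
  have [B|B] := classic (qle (dX x0 y) (dX x x0)).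
    exact: (forth_in_ball L_iso x_new x0f0_L x0_nearest v_lower v_upper yL B).
  exact: (forth_out_ball L_iso x_new x0f0_L v yL B).
have xy : x <> y by move=> e; apply: (x_new g); rewrite e.
split=> //=; split=> // e; case: xy; apply: (um_eq0 dX_um).
by rewrite dxy e fs_dist_self.
Qed.

Section FinModel.
Variable P : seq fsq.

Definition fin_pt (i : 'I_(size P)) : fsq := List.nth i P fs0.

Definition fin_dists : seq qnn := List.flat_map (fun a => map (fs_dist a) P) P.

Definition fin_model : fin_space :=
  @FinSpace 'I_(size P) (fun i j => fs_lt (fin_pt i) (fin_pt j))
    (fun i j => fs_dist (fin_pt i) (fin_pt j)) (q0 :: fin_dists).

Lemma size_length (T : Type) (s : seq T) : size s = List.length s.
Proof. by elim: s => //= c s ->. Qed.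

Lemma fin_pt_inj : List.NoDup P -> injective fin_pt.
Proof.
move=> P_uniq i j e; apply: val_inj.
have lt_len (k : 'I_(size P)) : (val k < List.length P)%coq_nat.
  by rewrite -size_length; apply/ssrnat.ltP; apply: ltn_ord.
exact: (proj1 (List.NoDup_nth P fs0) P_uniq _ _ (lt_len i) (lt_len j) e).
Qed.

Lemma fin_pt_in i : List.In (fin_pt i) P.
Proof. by apply: List.nth_In; rewrite -size_length; apply/ssrnat.ltP; apply: ltn_ord. Qed.

Lemma fin_pt_surj f : List.In f P -> exists i, fin_pt i = f.
Proof.
move=> /(List.In_nth _ _ fs0) [n [lt e]].
have lt' : (n < size P)%N by rewrite size_length; apply/ssrnat.ltP.
by exists (Ordinal lt').
Qed.

Lemma in_fin_dists f g : List.In f P -> List.In g P -> List.In (fs_dist f g) fin_dists.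
Proof. by move=> fP gP; apply/List.in_flat_map; exists f; split=> //; apply: List.in_map. Qed.

Lemma fin_model_cous : List.NoDup P -> is_fin_cous fin_model.
Proof.
move=> P_uniq; have [fs_irr [fs_trans fs_total]] := fs_lt_strict_linear.
have [fs_eq0 [fs_sym fs_um]] := fs_dist_ultrametric.
split.
  split=> [i|]; first exact: fs_irr.
  split=> [i j k|i j]; first exact: fs_trans.
  by have [|[/(fin_pt_inj P_uniq) ->|]] := fs_total (fin_pt i) (fin_pt j); auto.
split.
  split=> [i j|]; first by rewrite fs_eq0; split=> [/(fin_pt_inj P_uniq)|->].
  by split=> [i j|i j k]; [apply: fs_sym|apply: fs_um].
split; first by move=> ? ? ? ? ?; apply: fs_lt_convex.
by split=> [|i j]; [left|right; apply: in_fin_dists; apply: fin_pt_in].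
Qed.
End FinModel.

Lemma exists_NoDup_same (T : Type) (l : seq T) :
  exists l', List.NoDup l' /\ forall a, List.In a l <-> List.In a l'.
Proof.
elim: l => [|c l [l' [l'_uniq ll']]]; first by exists [::]; split=> //; constructor.
have [cl'|cNl'] := classic (List.In c l').
  by exists l'; split=> // a; split=> [[<-|/ll']|/ll'] //; right.
exists (c :: l'); split; first by constructor.
by move=> a; split=> [[<-|/ll']|[<-|/ll']]; by [left|right].
Qed.

Section ExtensionPoint.
Variables (L : seq (X * fsq)) (f : fsq) (P0 : seq fsq).
Hypotheses (L_iso : partial_iso L) (f_new : forall y, ~ List.In (y, f) L).
Hypotheses (P0_uniq : List.NoDup P0) (P0_L : forall g, List.In g (map snd L) <-> List.In g P0).

Let P := f :: P0.

Lemma partner_in_P0 y g : List.In (y, g) L -> List.In g P0.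
Proof. by move=> yg; apply/P0_L; apply: (List.in_map snd _ _ yg). Qed.

Definition partner_idx (y : X) : 'I_(size P) :=
  epsilon (inhabits (ord0 : 'I_(size P)))
    (fun i : 'I_(size P) => exists2 g, List.In (y, g) L & fin_pt i = g).

Lemma partner_idxE y g : List.In (y, g) L -> fin_pt (partner_idx y) = g.
Proof.
move=> yg; have [i ig] := fin_pt_surj (P := P) (or_intror (partner_in_P0 yg)).
have ex_i : exists i : 'I_(size P), exists2 g, List.In (y, g) L & fin_pt i = g by exists i, g.
have [g' yg' e] := epsilon_spec (inhabits (ord0 : 'I_(size P))) _ ex_i.
by have [E _ _] := L_iso yg yg'; rewrite /partner_idx e; apply/esym/E.
Qed.

Lemma extension_point : exists x, forall y g, List.In (y, g) L ->
  [/\ dX x y = fs_dist f g, fs_lt f g -> ltX x y & fs_lt g f -> ltX y x].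
Proof.
have P_uniq : List.NoDup P.
  constructor=> // /P0_L /List.in_map_iff [[y g] [/= e yg]].
  by case: (@f_new y); rewrite -e.
pose B := fin_model P; pose A := map fst L; pose eP := partner_idx.
have in_A a : List.In a A -> exists g, List.In (a, g) L.
  by move/List.in_map_iff => [[a' g] [/= <- ag]]; exists g.
have dA a a' : List.In a A -> List.In a' A -> List.In (dX a a') (fdist B).
  move=> /in_A [g ag] /in_A [g' ag']; have [_ D _] := L_iso ag ag'; rewrite [dX _ _]D.
  by right; apply: in_fin_dists; right; apply: partner_in_P0; [exact: ag|exact: ag'].
have eP_inj a a' : List.In a A -> List.In a' A -> eP a = eP a' -> a = a'.
  move=> /in_A [g ag] /in_A [g' ag'] e; have [E _ _] := L_iso ag ag'; apply/E => /=.
  by rewrite -(partner_idxE ag) -(partner_idxE ag'); congr fin_pt.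
have eP_lt a a' : List.In a A -> List.In a' A -> ltX a a' -> @flt B (eP a) (eP a').
  move=> /in_A [g ag] /in_A [g' ag'] lt; have [_ _ O] := L_iso ag ag'.
  by rewrite /= (partner_idxE ag) (partner_idxE ag'); apply/O.
have eP_d a a' : List.In a A -> List.In a' A -> @fd B (eP a) (eP a') = id (dX a a').
  move=> /in_A [g ag] /in_A [g' ag']; have [_ D _] := L_iso ag ag'.
  by rewrite /= (partner_idxE ag) (partner_idxE ag') D.
have [gP [gD [_ [gP_lt [_ [_ [gP_d [gP_eP gD_id]]]]]]]] :=
  @X_ext A (fdist B) (or_introl erefl) dA B (fin_model_cous P_uniq) eP id eP_inj eP_lt
    (fun r s _ _ rs => rs) erefl (fun r rE => rE) eP_d.
exists (gP ord0) => y g yg.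
have ey : gP (eP y) = y by apply: gP_eP; apply: (List.in_map fst _ _ yg).
have eg : fin_pt (eP y) = g := partner_idxE yg.
split=> [|fg|gf]; last 2 first.
- by rewrite -ey; apply: gP_lt; rewrite /= eg.
- by rewrite -ey; apply: gP_lt; rewrite /= eg.
rewrite -ey gP_d /= eg gD_id //; right; apply: in_fin_dists; first by left.
by right; apply: partner_in_P0 yg.
Qed.
End ExtensionPoint.

Lemma partial_iso_back L f : partial_iso L -> exists x, partial_iso ((x, f) :: L).
Proof.
move=> L_iso.
have [[x xfL]|f_new] := classic (exists x, List.In (x, f) L).
  by exists x; apply: partial_iso_cons => // q; apply: L_iso.
have {}f_new y : ~ List.In (y, f) L by move=> yf; apply: f_new; exists y.
have [P0 [P0_uniq P0_L]] := exists_NoDup_same (map snd L).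
have [x x_ext] := extension_point L_iso f_new P0_uniq P0_L.
exists x; apply: partial_iso_cons => // [[y g]] yg.
have [D lt_fg lt_gf] := x_ext _ _ yg.
have fg : f <> g by move=> e; apply: (f_new y); rewrite e.
have xy : x <> y.
  by move=> e; apply: fg; apply: (um_eq0 fs_dist_ultrametric); rewrite -D e (um_self dX_um).
split=> //=; split=> // xy_lt.
have [//|[e|/lt_gf yx]] := fs_lt_total f g; first by case: fg.
by case: (ltX_irr (ltX_trans xy_lt yx)).
Qed.

Section Limit.
Variable c : X -> nat.
Hypothesis c_inj : injective c.

Definition unit_space : fin_space :=
  @FinSpace unit (fun _ _ => False) (fun _ _ => q0) [:: q0].

Lemma unit_space_cous : is_fin_cous unit_space.
Proof.
split.
  split=> [x //|]; split=> [x y z //|[] []]; by right; left.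
split.
  split=> [x y|]; first by case: x; case: y.
  by split=> [x y //|x y z]; rewrite /= maxxx.
by split=> [x r a b d //|]; split=> [|x y]; left.
Qed.

Lemma X_inhabited : inhabited X.
Proof.
have [gP _] := @X_ext [::] [:: q0] (or_introl erefl) (fun _ _ a => match a with end)
  unit_space unit_space_cous (fun _ => tt) id (fun _ _ a => match a with end)
  (fun _ _ a => match a with end) (fun _ _ _ _ rs => rs) erefl (fun _ rE => rE)
  (fun _ _ a => match a with end).
exact: inhabits (gP tt).
Qed.

Definition enum_X (n : nat) : X := epsilon X_inhabited (fun x => c x = n).

Lemma enum_X_c x : enum_X (c x) = x.
Proof. by apply: c_inj; apply: (epsilon_spec X_inhabited (fun y => c y = c x)); exists x. Qed.

Definition piso_seq := {L : seq (X * fsq) | partial_iso L}.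

Definition forth_step (L : piso_seq) (x : X) : piso_seq :=
  let: exist f Hf := constructive_indefinite_description _
    (partial_iso_forth x (proj2_sig L)) in
  exist _ ((x, f) :: proj1_sig L) Hf.

Definition back_step (L : piso_seq) (f : fsq) : piso_seq :=
  let: exist x Hx := constructive_indefinite_description _
    (partial_iso_back f (proj2_sig L)) in
  exist _ ((x, f) :: proj1_sig L) Hx.

Lemma forth_stepE L x : exists f, proj1_sig (forth_step L x) = (x, f) :: proj1_sig L.
Proof. by rewrite /forth_step; case: constructive_indefinite_description => f Hf; exists f. Qed.

Lemma back_stepE L f : exists x, proj1_sig (back_step L f) = (x, f) :: proj1_sig L.
Proof. by rewrite /back_step; case: constructive_indefinite_description => x Hx; exists x. Qed.

Fixpoint chain (n : nat) : piso_seq :=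
  if n is k.+1 then back_step (forth_step (chain k) (enum_X k)) (fs_enum k)
  else exist _ [::] partial_iso_nil.

Lemma chain_mono k n p : (k <= n)%N ->
  List.In p (proj1_sig (chain k)) -> List.In p (proj1_sig (chain n)).
Proof.
elim: n => [|n IH]; first by rewrite leqn0 => /eqP ->.
rewrite leq_eqVlt ltnS => /orP [/eqP -> //|kn] /(IH kn) pn /=.
have [x ->] := back_stepE (forth_step (chain n) (enum_X n)) (fs_enum n).
by have [f ->] := forth_stepE (chain n) (enum_X n); right; right.
Qed.

Definition related (x : X) (f : fsq) : Prop := exists n, List.In (x, f) (proj1_sig (chain n)).

Lemma related_matched x f y g : related x f -> related y g -> matched (x, f) (y, g).
Proof.
move=> [n1 xf] [n2 yg]; apply: (proj2_sig (chain (maxn n1 n2))).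
  exact: chain_mono (leq_maxl n1 n2) xf.
exact: chain_mono (leq_maxr n1 n2) yg.
Qed.

Lemma related_total x : exists f, related x f.
Proof.
have [y e] := back_stepE (forth_step (chain (c x)) (enum_X (c x))) (fs_enum (c x)).
have [f e'] := forth_stepE (chain (c x)) (enum_X (c x)).
by exists f, (c x).+1; rewrite /= e e' enum_X_c; right; left.
Qed.

Lemma related_onto f : exists x, related x f.
Proof.
have [n <-] := fs_enum_surj f.
have [y e] := back_stepE (forth_step (chain n) (enum_X n)) (fs_enum n).
by exists y, n.+1; rewrite /= e; left.
Qed.

Definition to_fs (x : X) : fsq := epsilon (inhabits fs0) (related x).
Definition of_fs (f : fsq) : X := epsilon X_inhabited (related^~ f).

Lemma related_to_fs x : related x (to_fs x).
Proof. exact: epsilon_spec (related_total x). Qed.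

Lemma related_of_fs f : related (of_fs f) f.
Proof. exact: epsilon_spec (related^~ f) (related_onto f). Qed.

Lemma fsq_model_iso : exists (F : X -> fsq) (G : fsq -> X),
  [/\ cancel F G, cancel G F, forall f g, dX (G f) (G g) = fs_dist f g
    & forall f g, ltX (G f) (G g) <-> fs_lt f g].
Proof.
exists to_fs, of_fs; split=> [x|f|f g|f g].
- by have [E _ _] := related_matched (related_of_fs (to_fs x)) (related_to_fs x); apply/E.
- by have [E _ _] := related_matched (related_to_fs (of_fs f)) (related_of_fs f); apply/E.
- by have [_ D _] := related_matched (related_of_fs f) (related_of_fs g).
- by have [_ _ O] := related_matched (related_of_fs f) (related_of_fs g).
Qed.
End Limit.
End BackAndForth.

Local Notation finv := Defs.finv.

Section Inverse.
Variables (A : Type) (f : A -> A).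
Hypothesis f_bij : bijective f.

Lemma f_finv : cancel (finv f) f.
Proof.
case: f_bij => g fg gf y; rewrite /finv.
by apply: (epsilon_spec (inhabits y) (fun x => f x = y)); exists (g y).
Qed.

Lemma finv_f : cancel f (finv f).
Proof. by move=> x; apply: (bij_inj f_bij); rewrite f_finv. Qed.

Lemma finv_bij : bijective (finv f).
Proof. by exists f; [apply: f_finv|apply: finv_f]. Qed.
End Inverse.

Lemma autQ_q0 phi : is_autQ phi -> phi q0 = q0.
Proof.
case=> phi_bij phi_lt; have [e|/qlt0] := classic (finv phi q0 = q0).
  by rewrite -{1}e f_finv.
by rewrite -phi_lt f_finv // => /qltn0.
Qed.

Lemma autQ_finv phi : is_autQ phi -> is_autQ (finv phi).
Proof.
case=> phi_bij phi_lt; split; first exact: finv_bij.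
by move=> r s; rewrite -phi_lt !f_finv.
Qed.

Lemma autQ_comp phi psi : is_autQ phi -> is_autQ psi -> is_autQ (phi \o psi).
Proof.
case=> phi_bij phi_lt [psi_bij psi_lt]; split; first exact: bij_comp.
by move=> r s /=; rewrite phi_lt psi_lt.
Qed.

Lemma autQ_id : is_autQ id.
Proof. by split; [exists id|]. Qed.

Section FsqAction.
Implicit Types (f g : fsq) (t : qnn).

Definition fs_supp f : seq qnn :=
  map toq (proj1_sig (constructive_indefinite_description _ (fsq_finite f))).

Lemma fs_supp_spec f t : f t <> 0 -> List.In t (fs_supp f).
Proof.
rewrite /fs_supp; case: constructive_indefinite_description => s fs /= /fs.
by rewrite -{2}(toqK t); apply: List.in_map.
Qed.

Section Action.
Variables (phi : qnn -> qnn) (phi_aut : is_autQ phi).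

Lemma fs_act_fun0 f : f (finv phi q0) = 0.
Proof. by rewrite (autQ_q0 (autQ_finv phi_aut)) fsq_fun0. Qed.

Lemma fs_act_finite f :
  exists s : seq rat, forall t, f (finv phi t) <> 0 -> List.In (qv t) s.
Proof.
have [s fs] := fsq_finite f; exists (map (fun u => qv (phi (toq u))) s) => t /fs.
move/(List.in_map (fun u => qv (phi (toq u)))).
by rewrite toqK f_finv //; case: phi_aut.
Qed.
End Action.

(* [fs_act phi f = f \o phi^-1]; the junk value [f] when [phi] is not an automorphism. *)
Definition fs_act (phi : qnn -> qnn) f : fsq :=
  match excluded_middle_informative (is_autQ phi) with
  | left phi_aut => FSq (fs_act_fun0 phi_aut f) (fs_act_finite phi_aut f)
  | right _ => f
  end.

Lemma fs_actE phi f t : is_autQ phi -> fs_act phi f t = f (finv phi t).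
Proof. by rewrite /fs_act; case: excluded_middle_informative. Qed.

Section ActionTheory.
Variables (phi psi : qnn -> qnn).
Hypotheses (phi_aut : is_autQ phi) (psi_aut : is_autQ psi).

Lemma fs_act_dist f g : fs_dist (fs_act phi f) (fs_act phi g) = phi (fs_dist f g).
Proof.
have [phi_bij phi_lt] := phi_aut.
have [->|fg] := classic (f = g); first by rewrite !fs_dist_self autQ_q0.
apply: fs_distE => [|t lt]; first by rewrite !fs_actE // finv_f //; apply: fs_dist_neq.
by rewrite !fs_actE //; apply: fs_dist_above; rewrite -phi_lt f_finv.
Qed.

Lemma fs_act_lt f g : fs_lt (fs_act phi f) (fs_act phi g) <-> fs_lt f g.
Proof.
have [phi_bij _] := phi_aut.
have [->|fg] := classic (f = g); first by split=> /fs_lt_irr.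
have fg' : fs_act phi f <> fs_act phi g.
  move=> e; apply: (fs_dist_neq fg).
  by have := congr1 (fun u : fsq => u (phi (fs_dist f g))) e; rewrite /= !fs_actE // finv_f.
by rewrite (fs_lt_at (fs_act_dist f g) fg') (fs_lt_at erefl fg) !fs_actE // finv_f.
Qed.

Lemma fs_act_comp f : fs_act phi (fs_act psi f) = fs_act (phi \o psi) f.
Proof.
have [phi_bij _] := phi_aut; have [psi_bij _] := psi_aut.
have [comp_bij _] := autQ_comp phi_aut psi_aut.
apply: fsq_ext => t; rewrite !fs_actE //; last exact: autQ_comp.
congr (fsq_fun f _); apply: (bij_inj comp_bij).
by rewrite f_finv //= !f_finv.
Qed.

Lemma fs_act_supp f : (forall u, List.In u (fs_supp f) -> psi u = phi u) ->
  fs_act psi f = fs_act phi f.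
Proof.
have [phi_bij _] := phi_aut; have [psi_bij _] := psi_aut.
move=> agree; apply: fsq_ext => t; rewrite !fs_actE //.
have [[u [uf <-]]|not_img] := classic (exists u, List.In u (fs_supp f) /\ phi u = t).
  by rewrite -{1}(agree _ uf) !finv_f.
have f0 u : phi u = t -> f u = 0.
  by move=> ut; apply: NNPP => /fs_supp_spec uf; apply: not_img; exists u.
rewrite [f (finv phi t)]f0 ?f_finv //; apply: NNPP => /fs_supp_spec uf; apply: not_img.
by exists (finv psi t); rewrite -agree ?f_finv.
Qed.

End ActionTheory.

Lemma fs_act_id phi f : is_autQ phi ->
  (forall u, List.In u (fs_supp f) -> phi u = u) -> fs_act phi f = f.
Proof.
move=> phi_aut fixed; rewrite (fs_act_supp autQ_id phi_aut fixed).
apply: fsq_ext => t; rewrite fs_actE; last exact: autQ_id.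
by congr (fsq_fun f _); apply: (f_finv (proj1 autQ_id)).
Qed.
End FsqAction.

Lemma aut_mul_aut (X : Type) (ltX : X -> X -> Prop) (dX : X -> X -> qnn)
    (g h : aut_pair X) :
  is_aut ltX dX g -> is_aut ltX dX h -> is_aut ltX dX (aut_mul g h).
Proof.
move=> [g_bij [g_lt [g_aut [g0 g_d]]]] [h_bij [h_lt [h_aut [h0 h_d]]]].
split; first exact: bij_comp.
split; first by move=> x y /=; rewrite g_lt h_lt.
split; first exact: autQ_comp.
by split=> [|x y] /=; rewrite ?h0 ?g0 // g_d h_d.
Qed.

Lemma i_prec_embedding (X : Type) (ltX : X -> X -> Prop) (dX : X -> X -> qnn) :
  pw_embedding (is_iso ltX dX) (@ev_aut X) (is_aut ltX dX) (@ev_aut X) (@i_prec X).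
Proof.
split.
  split=> [g [] //|U [U_iso U_open]]; split=> [g [] //|g [g_iso Ug]].
  have [s s_nbhd] := U_open _ Ug; exists s => h h_iso hg; split=> //.
  by apply: s_nbhd; first case: h_iso.
split=> [g g' _ _ //|U [U_iso U_open]].
(* V is the union of the basic neighbourhoods in Aut of the points of U. *)
pose V y := is_aut ltX dX y /\ exists g s, [/\ U g,
  forall h, is_iso ltX dX h -> (forall i, List.In i s -> ev_aut h i = ev_aut g i) -> U h
  & forall i, List.In i s -> ev_aut y i = ev_aut g i].
exists V; split.
  split=> [y [] //|y [y_aut [g [s [Ug s_nbhd yg]]]]]; exists s => h h_aut hy.
  by split=> //; exists g, s; split=> // i si; rewrite hy ?yg.
move=> y; split=> [[g [Ug <-]]|[[y_aut [g [s [Ug s_nbhd yg]]]] [g' [g'_iso e]]]].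
  have g_iso := U_iso _ Ug; split; last by exists g.
  split; first by case: g_iso.
  by have [s s_nbhd] := U_open _ Ug; exists g, s.
by exists y; split=> //; apply: s_nbhd => //; rewrite -e.
Qed.

Lemma pi_prec_continuous (X : Type) (ltX : X -> X -> Prop) (dX : X -> X -> qnn) :
  pw_continuous (is_aut ltX dX) (@ev_aut X) is_autQ ev_autQ (@pi_prec X).
Proof.
split=> [g [_ [_ []]] //|U [U_aut U_open]]; split=> [g [] //|g [g_aut Ug]].
have [s s_nbhd] := U_open _ Ug; exists (map inr s) => h h_aut hg; split=> //.
apply: s_nbhd; first by case: h_aut => _ [_ []].
by move=> r rs; have := hg (inr r) (List.in_map _ _ _ rs); case.
Qed.

Section Splitting.
Variables (X : Type) (ltX : X -> X -> Prop) (dX : X -> X -> qnn) (F : X -> fsq) (G : fsq -> X).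
Hypotheses (FK : cancel F G) (GK : cancel G F).
Hypotheses (G_dist : forall f g, dX (G f) (G g) = fs_dist f g)
  (G_lt : forall f g, ltX (G f) (G g) <-> fs_lt f g).

Lemma F_dist x y : fs_dist (F x) (F y) = dX x y.
Proof. by rewrite -G_dist !FK. Qed.

Lemma F_lt x y : fs_lt (F x) (F y) <-> ltX x y.
Proof. by rewrite -G_lt !FK. Qed.

Definition sec (phi : qnn -> qnn) : aut_pair X := (fun x => G (fs_act phi (F x)), phi).

Lemma sec_aut phi : is_autQ phi -> is_aut ltX dX (sec phi).
Proof.
move=> phi_aut; have phiV_aut := autQ_finv phi_aut; have [phi_bij _] := phi_aut.
split.
  exists (sec (finv phi)).1 => x /=; rewrite GK fs_act_comp // fs_act_id ?FK //;
    by [apply: autQ_comp|move=> u _ /=; rewrite ?finv_f ?f_finv].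
split; first by move=> x y /=; rewrite G_lt fs_act_lt // F_lt.
by split=> //; split=> [|x y]; rewrite ?autQ_q0 //= G_dist fs_act_dist // F_dist.
Qed.

Lemma sec_mul phi psi : is_autQ phi -> is_autQ psi ->
  sec (phi \o psi) = aut_mul (sec phi) (sec psi).
Proof.
move=> phi_aut psi_aut; congr pair; apply: functional_extensionality => x /=.
by rewrite GK fs_act_comp.
Qed.

Definition supp_idx (s : seq (X + qnn)) : seq qnn :=
  List.flat_map (fun i => match i with inl x => fs_supp (F x) | inr r => [:: r] end) s.

Lemma supp_idx_inl x s u :
  List.In (inl x) s -> List.In u (fs_supp (F x)) -> List.In u (supp_idx s).
Proof. by move=> xs ux; apply/List.in_flat_map; exists (inl x). Qed.

Lemma supp_idx_inr r s : List.In (inr r) s -> List.In r (supp_idx s).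
Proof. by move=> rs; apply/List.in_flat_map; exists (inr r); split=> //; left. Qed.

Lemma sec_agree phi psi s : is_autQ phi -> is_autQ psi ->
  (forall u, List.In u (supp_idx s) -> psi u = phi u) ->
  forall i, List.In i s -> ev_aut (sec psi) i = ev_aut (sec phi) i.
Proof.
move=> phi_aut psi_aut agree [x|r] i_s /=; last by rewrite agree //; apply: supp_idx_inr.
by rewrite (fs_act_supp phi_aut psi_aut) // => u /(supp_idx_inl i_s) /agree.
Qed.

Lemma sec_continuous : pw_continuous is_autQ ev_autQ (is_aut ltX dX) (@ev_aut X) sec.
Proof.
split=> [|U [U_aut U_open]]; first exact: sec_aut.
split=> [phi [] //|phi [phi_aut Uphi]].
have [s s_nbhd] := U_open _ Uphi; exists (supp_idx s) => psi psi_aut agree; split=> //.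
by apply: s_nbhd; [apply: sec_aut|apply: sec_agree].
Qed.

Lemma pi_prec_open : pw_openmap (is_aut ltX dX) (@ev_aut X) is_autQ ev_autQ (@pi_prec X).
Proof.
move=> U [U_aut U_open]; split=> [_ [g [Ug <-]]|_ [g [Ug <-]]].
  by case: (U_aut _ Ug) => _ [_ []].
have g_aut := U_aut _ Ug; have [_ [_ [g2_aut _]]] := g_aut; have [g2_bij _] := g2_aut.
have [s s_nbhd] := U_open _ Ug; exists (supp_idx s) => psi psi_aut agree.
pose theta := finv g.2 \o psi.
have theta_aut : is_autQ theta by apply: autQ_comp => //; apply: autQ_finv.
exists (aut_mul g (sec theta)); split; last first.
  by apply: functional_extensionality => t; rewrite /pi_prec /= f_finv.
apply: s_nbhd => [|[x|r] i_s /=]; first by apply: aut_mul_aut => //; apply: sec_aut.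
  rewrite fs_act_id ?FK // => u u_supp.
  have e : psi u = g.2 u := agree u (supp_idx_inl i_s u_supp).
  by rewrite /theta /= e finv_f.
have e : psi r = g.2 r := agree r (supp_idx_inr i_s).
by rewrite /theta /= e finv_f.
Qed.

Let sd_dom := prod_set (is_iso ltX dX) is_autQ.
Let sd_ev := ev_prod (@ev_aut X) ev_autQ.

Lemma sd_map_aut p : sd_dom p -> is_aut ltX dX (sd_map sec p).
Proof. by case: p => n h [[n_aut _] h_aut]; apply: aut_mul_aut => //; apply: sec_aut. Qed.

Lemma sd_map_continuous : pw_continuous sd_dom sd_ev (is_aut ltX dX) (@ev_aut X) (sd_map sec).
Proof.
split=> [|U [U_aut U_open]]; first exact: sd_map_aut.
split=> [p [] //|[n h] [nh_dom Unh]].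
have [s s_nbhd] := U_open _ Unh; have [[_ n2] h_aut] := nh_dom.
(* [n] is read at the points [sec h x], and [h] on the supports of the [F x]. *)
pose s' : seq ((X + qnn) + qnn) := List.flat_map (fun i => match i with
   | inl x => inl (inl ((sec h).1 x)) :: map inr (fs_supp (F x))
   | inr r => [:: inr r] end) s.
exists s' => [[n' h']] nh'_dom agree; split=> //; have [[_ n2'] h'_aut] := nh'_dom.
apply: s_nbhd => [|[x|r] i_s /=]; first exact: sd_map_aut.
  have e1 : fs_act h' (F x) = fs_act h (F x).
    apply: fs_act_supp => // u u_supp.
    have : List.In (inr u) s'.
      by apply/List.in_flat_map; exists (inl x); split=> //; right; apply: List.in_map.
    by move/agree; case.
  have : List.In (inl (inl ((sec h).1 x))) s'.
    by apply/List.in_flat_map; exists (inl x); split=> //; left.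
  by move/agree; rewrite /= e1; case=> ->.
have : List.In (inr r) s' by apply/List.in_flat_map; exists (inr r); split=> //; left.
by move/agree; rewrite /= /ev_autQ n2 n2'; case=> ->.
Qed.

Lemma sd_map_decomp (g : aut_pair X) : is_aut ltX dX g ->
  sd_dom (aut_mul g (sec (finv g.2)), g.2) /\ sd_map sec (aut_mul g (sec (finv g.2)), g.2) = g.
Proof.
move=> g_aut; have [_ [_ [g2_aut _]]] := g_aut; have [g2_bij _] := g2_aut.
have g2V_aut := autQ_finv g2_aut.
split.
  split=> //; split; first by apply: aut_mul_aut => //; apply: sec_aut.
  by apply: functional_extensionality => t /=; rewrite f_finv.
case: g g_aut g2_aut g2_bij g2V_aut => g1 g2 /= g_aut g2_aut g2_bij g2V_aut.
rewrite /sd_map /aut_mul /sec /=; congr pair; apply: functional_extensionality => x /=.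
  rewrite GK fs_act_comp // fs_act_id ?FK //; first exact: autQ_comp.
  by move=> u _ /=; rewrite finv_f.
by rewrite finv_f.
Qed.

Lemma sd_map_open : pw_openmap sd_dom sd_ev (is_aut ltX dX) (@ev_aut X) (sd_map sec).
Proof.
move=> U [U_dom U_open]; split=> [_ [p [Up <-]]|_ [[n h] [Unh <-]]].
  exact/sd_map_aut/U_dom.
have [[n_aut n2] h_aut] := U_dom _ Unh; have [s s_nbhd] := U_open _ Unh.
have [h_bij _] := h_aut; have hV_aut := autQ_finv h_aut.
(* [g] is close to [n sec h] when [g] agrees with it at the points [sec h^-1 x]
   and [g.2] agrees with [h] at the points [h^-1 u] for [u] in the supports of the [F x]. *)
pose s' : seq (X + qnn) := List.flat_map (fun i => match i with
   | inl (inl x) => inl ((sec (finv h)).1 x) :: map (fun u => inr (finv h u)) (fs_supp (F x))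
   | inl (inr r) => [::]
   | inr r => [:: inr r] end) s.
exists s' => g g_aut agree; have [p_dom p_g] := sd_map_decomp g_aut.
exists (aut_mul g (sec (finv g.2)), g.2); split=> //.
have [_ [_ [g2_aut _]]] := g_aut; have [g2_bij _] := g2_aut.
apply: s_nbhd => // [[[x|r]|r]] i_s /=.
- have e1 : fs_act (finv g.2) (F x) = fs_act (finv h) (F x).
    apply: fs_act_supp => //; first exact: autQ_finv.
    move=> u u_supp; have : List.In (inr (finv h u)) s'.
      apply/List.in_flat_map; exists (inl (inl x)); split=> //; right.
      exact: (List.in_map (fun u => inr (finv h u))).
    move/agree; rewrite /= n2 /= f_finv //; case=> e.
    by rewrite -{1}e finv_f.
  have : List.In (inl ((sec (finv h)).1 x)) s'.
    by apply/List.in_flat_map; exists (inl (inl x)); split=> //; left.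
  move/agree; rewrite /= e1; case=> ->.
  rewrite GK fs_act_comp // fs_act_id ?FK //; first exact: autQ_comp.
  by move=> u _ /=; rewrite f_finv.
- by rewrite n2 f_finv.
- have : List.In (inr r) s' by apply/List.in_flat_map; exists (inr r); split=> //; left.
  by move/agree; rewrite /= n2 /=; case=> e; rewrite /ev_autQ e.
Qed.

Lemma sd_map_inj : inj_on sd_dom (sd_map sec).
Proof.
move=> [n h] [n' h'] [[n_aut n2] h_aut] [[n'_aut n2'] h'_aut] e.
have hh' : h = h'.
  apply: functional_extensionality => t.
  by have := congr1 (fun p => p.2 t) e; rewrite /= n2 n2'.
subst h'; have [h_bij _] := h_aut.
have nn' : n.1 = n'.1.
  apply: functional_extensionality => x.
  have := congr1 (fun p => p.1 ((sec (finv h)).1 x)) e; rewrite /= GK fs_act_comp //;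
    last exact: autQ_finv.
  rewrite fs_act_id ?FK //; first by apply: autQ_comp => //; apply: autQ_finv.
  by move=> u _ /=; rewrite f_finv.
by case: n n' nn' n2 n2' {n_aut n'_aut e h_aut h'_aut h_bij} => [a b] [a' b'] /= -> -> ->.
Qed.

Lemma sd_map_hom : hom_on sd_dom (sd_mul sec) (@aut_mul X) (sd_map sec).
Proof.
move=> [n1 h1] [n2 h2] [[_ n1_2] h1_aut] [[_ n2_2] h2_aut]; rewrite /= in h1_aut h2_aut.
have [h1_bij _] := h1_aut.
case: n1 n2 n1_2 n2_2 => [a1 b1] [a2 b2] /= -> ->.
rewrite /sd_mul /sd_map /aut_mul /aut_inv /autQ_mul /=; congr pair.
  apply: functional_extensionality => x /=.
  have -> : G (fs_act (h1 \o h2) (F x)) = (sec h1).1 (G (fs_act h2 (F x))).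
    by rewrite /= GK fs_act_comp.
  by rewrite finv_f //; have [] := sec_aut h1_aut.
by apply: functional_extensionality => t /=; rewrite finv_f.
Qed.
End Splitting.

Local Close Scope ring_scope.

Theorem theorem4p5 (X : Type) (ltX : X -> X -> Prop) (dX : X -> X -> qnn) :
  is_U_prec ltX dX ->
  (* i^prec : Iso -> Aut is a continuous embedding and a homomorphism *)
  pw_embedding (is_iso ltX dX) (@ev_aut X) (is_aut ltX dX) (@ev_aut X) (@i_prec X) /\
  hom_on (is_iso ltX dX) (@aut_mul X) (@aut_mul X) (@i_prec X) /\
  (* pi^prec : Aut -> Aut(Q>=0) is a continuous open surjective homomorphism *)
  pw_continuous (is_aut ltX dX) (@ev_aut X) is_autQ ev_autQ (@pi_prec X) /\
  pw_openmap (is_aut ltX dX) (@ev_aut X) is_autQ ev_autQ (@pi_prec X) /\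
  (forall phi, is_autQ phi -> exists g, is_aut ltX dX g /\ pi_prec g = phi) /\
  hom_on (is_aut ltX dX) (@aut_mul X) autQ_mul (@pi_prec X) /\
  (* exactness: i^prec[Iso] = ker pi^prec *)
  (forall g, (is_aut ltX dX g /\ pi_prec g = id) <->
             (exists n, is_iso ltX dX n /\ i_prec n = g)) /\
  (* continuous homomorphic section inducing Aut ≅ Iso ⋊ Aut(Q>=0) *)
  (exists s : (qnn -> qnn) -> aut_pair X,
     pw_continuous is_autQ ev_autQ (is_aut ltX dX) (@ev_aut X) s /\
     hom_on is_autQ autQ_mul (@aut_mul X) s /\
     (forall phi, is_autQ phi -> pi_prec (s phi) = phi) /\
     pw_homeo (prod_set (is_iso ltX dX) is_autQ) (ev_prod (@ev_aut X) ev_autQ)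
              (is_aut ltX dX) (@ev_aut X) (sd_map s) /\
     hom_on (prod_set (is_iso ltX dX) is_autQ) (sd_mul s) (@aut_mul X) (sd_map s)).
Proof.
move=> [[c c_inj] [lt_lin [d_um [convex ext]]]].
have [F [G [FK GK G_dist G_lt]]] := fsq_model_iso lt_lin d_um convex ext c_inj.
split; first exact: i_prec_embedding.
split; first by [].
split; first exact: pi_prec_continuous.
split; first exact: pi_prec_open FK GK G_dist G_lt.
split; first by move=> phi phi_aut; exists (sec F G phi); split=> //; apply: sec_aut.
split; first by [].
split; first by move=> g; split=> [[g_aut g2]|[n [n_iso <-]]]; [exists g|].
exists (sec F G); split; first exact: sec_continuous FK GK G_dist G_lt.
split; first by move=> phi psi; apply: sec_mul.
split; first by [].
split; last exact: sd_map_hom FK GK G_dist G_lt.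
split; first exact: sd_map_continuous FK GK G_dist G_lt.
split; first exact: sd_map_open FK GK G_dist G_lt.
split; first exact: sd_map_inj FK GK.
move=> g /(sd_map_decomp FK GK G_dist G_lt) [p_dom p_g].
by eexists; split; [exact: p_dom|exact: p_g].
Qed.
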